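(* Let $f(z)=z+\sum_{k=2}^{\infty}a_kz^k$ be analytic in $\mathbb{D}=\{z:|z|<1\}$ with $zf'(z)-f(z)=\frac12 z^2\phi(z)$ for all $z\in\mathbb{D}$, where $\phi$ is analytic in $\mathbb{D}$ and $|\phi(z)|\le1$. Let $r_{\mathcal K}$ denote the positive root (in $(0,1)$) of \[(1-r)^2\ln(1-r)+2-7r+4r^2=0.\] Then for every $n\ge2$ the partial sum $s_n(z;f)=z+\sum_{k=2}^n a_kz^k$ is convex in the disk $|z|<r_{\mathcal K}$.
   Context: A function analytic in a disk is convex there if it maps the disk conformally onto a convex domain; equivalently, for normalized $g$ with $g'\neq0$, $\mathrm{Re}(1+zg''(z)/g'(z))>0$ in the disk. *)

(* Stdlib reals + Coquelicot complex numbers C.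
   is_derive over C_AbsRing is the complex (holomorphic) derivative. *)
From Stdlib Require Import Reals.
From Coquelicot Require Export Coquelicot.
Open Scope C_scope.

Definition in_disk (r : R) (z : C) : Prop := (Cmod z < r)%R.

Definition analytic_in_disk (r : R) (g : C -> C) : Prop :=
  forall z, in_disk r z -> ex_derive g z.

(* g is convex in the disk |z| < r (analytic criterion for normalized g):
   g', g'' exist there, g' <> 0 and Re(1 + z g''(z)/g'(z)) > 0. *)
Definition convex_in_disk (r : R) (g : C -> C) : Prop :=
  exists g1 g2 : C -> C,
    forall z, in_disk r z ->
      is_derive g z (g1 z) /\ is_derive g1 z (g2 z) /\
      g1 z <> 0 /\ (0 < Re (1 + z * g2 z / g1 z))%R.

(* partial sum s_n(z; f) = sum_{k=0}^n a_k z^k  (with a_0 = 0, a_1 = 1) *)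
Definition partial_sum (a : nat -> C) (n : nat) (z : C) : C :=
  sum_n (fun k => a k * pow_n z k) n.

(* Since [z f' - f = sum_k (k - 1) a_k z^k = z^2 phi / 2] has modulus at most [1/2] in the
   disk, Cauchy's estimate (proved here by averaging over roots of unity) gives
   [|a_k| <= 1 / (2 (k - 1))].  For [|z| = r] this yields
   [|s_n'(z) - 1| + |z s_n''(z)| <= sum_(k >= 2) k^2 r^(k-1) / (2 (k - 1))], and splitting
   [k^2 / (k - 1) = k + 1 + 1 / (k - 1)] bounds the right-hand side by
   [(1/(1-r)^2 - 1 + r/(1-r) - ln (1-r)) / 2], which equals [1] exactly at [r = r_K].
   Hence for [r < r_K] we get [s_n' <> 0] and [Re (1 + z s_n''/s_n') > 0].  The hypotheses
   give [f'] only as an abstract derivative, so it is first identified with the termwise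
   derivative of the power series. *)

From Stdlib Require Import Reals Lra Lia.
From Coquelicot Require Import Coquelicot.
Open Scope R_scope.

Lemma pow_le_1 x k : 0 <= x <= 1 -> x ^ k <= 1.
Proof. intros Hx. rewrite <- (pow1 k). apply pow_incr. exact Hx. Qed.

Lemma sum_n_m_from_2 {G : AbelianMonoid} (f : nat -> G) n : (2 <= n)%nat ->
  sum_n_m f 2 n = sum_n (fun j => f (S (S j))) (n - 2).
Proof.
  intros Hn. unfold sum_n. replace n with (S (S (n - 2))) at 1 by lia.
  now rewrite <- !sum_n_m_S.
Qed.

Lemma sum_pow_from_2_le x n : 0 <= x < 1 ->
  sum_n_m (fun k => x ^ (k - 1)) 2 n <= x / (1 - x).
Proof.
  intros Hx.
  assert (Hx1 : 0 < 1 - x) by lra.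
  assert (Hclosed : forall m, (1 <= m)%nat ->
    sum_n_m (fun k => x ^ (k - 1)) 2 m <= (x - x ^ m) / (1 - x)).
  { induction 1 as [|m Hm IH].
    - rewrite sum_n_m_zero by lia.
      replace ((x - x ^ 1) / (1 - x)) with 0 by (field; lra). apply Rle_refl.
    - rewrite sum_n_Sm by lia. change plus with Rplus. cbv beta.
      replace (S m - 1)%nat with m by lia.
      replace ((x - x ^ S m) / (1 - x)) with ((x - x ^ m) / (1 - x) + x ^ m)
        by (simpl; field; lra).
      lra. }
  destruct n as [|n].
  - rewrite sum_n_m_zero by lia. apply Rdiv_le_0_compat; lra.
  - eapply Rle_trans; [apply Hclosed; lia|].
    apply Rmult_le_compat_r; [left; apply Rinv_0_lt_compat; lra|].
    pose proof (pow_le x (S n) (proj1 Hx)). lra.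
Qed.

Lemma sum_kpow_from_2_le x n : 0 <= x < 1 ->
  sum_n_m (fun k => INR k * x ^ (k - 1)) 2 n <= / (1 - x) ^ 2 - 1.
Proof.
  intros Hx.
  assert (Hx1 : 0 < 1 - x) by lra.
  assert (Hclosed : forall m, (1 <= m)%nat ->
    sum_n_m (fun k => INR k * x ^ (k - 1)) 2 m <=
    (1 - (INR m + 1) * x ^ m + INR m * x ^ (m + 1)) / (1 - x) ^ 2 - 1).
  { induction 1 as [|m Hm IH].
    - rewrite sum_n_m_zero by lia.
      replace ((1 - (INR 1 + 1) * x ^ 1 + INR 1 * x ^ (1 + 1)) / (1 - x) ^ 2 - 1) with 0
        by (simpl; field; lra).
      apply Rle_refl.
    - rewrite sum_n_Sm by lia. change plus with Rplus. cbv beta.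
      replace (S m - 1)%nat with m by lia.
      replace ((1 - (INR (S m) + 1) * x ^ S m + INR (S m) * x ^ (S m + 1)) / (1 - x) ^ 2 - 1)
        with ((1 - (INR m + 1) * x ^ m + INR m * x ^ (m + 1)) / (1 - x) ^ 2 - 1 + INR (S m) * x ^ m)
        by (rewrite !Nat.add_1_r, !S_INR; simpl; field; lra).
      lra. }
  assert (Hpos : 0 <= / (1 - x) ^ 2 - 1).
  { assert ((1 - x) ^ 2 <= 1) by nra.
    assert (1 <= / (1 - x) ^ 2).
    { rewrite <- Rinv_1. apply Rinv_le_contravar; [apply pow_lt|]; lra. }
    lra. }
  destruct n as [|n].
  - rewrite sum_n_m_zero by lia. exact Hpos.
  - eapply Rle_trans; [apply Hclosed; lia|]. unfold Rdiv.
    apply Rplus_le_compat_r. rewrite <- (Rmult_1_l (/ (1 - x) ^ 2)) at 2.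
    apply Rmult_le_compat_r; [left; apply Rinv_0_lt_compat, pow_lt; lra|].
    assert (0 <= x ^ S n * (INR (S n) * (1 - x) + 1)).
    { apply Rmult_le_pos; [apply pow_le; lra|]. pose proof (pos_INR (S n)). nra. }
    rewrite pow_add. simpl (x ^ 1). lra.
Qed.

Lemma sum_log_series_le x m : 0 <= x < 1 ->
  sum_n (fun j => x ^ S j / INR (S j)) m <= - ln (1 - x).
Proof.
  intros Hx.
  set (gap := fun y => - ln (1 - y) - sum_n (fun j => y ^ S j / INR (S j)) m).
  assert (Hgap' : forall y, y < 1 -> is_derive gap y (y ^ S m / (1 - y))).
  { intros y Hy.
    replace (y ^ S m / (1 - y)) with (/ (1 - y) - sum_n (fun j => y ^ j) m).
    2:{ rewrite sum_n_Reals, tech3 by lra. field. lra. }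
    apply (is_derive_minus (K:=R_AbsRing) (V:=R_NormedModule)).
    - auto_derive; [lra | field; lra].
    - apply (is_derive_sum_n (K:=R_AbsRing) (V:=R_NormedModule)). intros j _.
      auto_derive; [exact I|]. rewrite <- !S_INR. field.
      destruct j; [apply R1_neq_R0 | apply not_0_INR; lia]. }
  assert (Hgap0 : gap 0 = 0).
  { unfold gap. rewrite Rminus_0_r, ln_1, sum_n_Reals.
    rewrite (sum_eq _ (fun _ => 0)), sum_cte by (intros; simpl; lra). lra. }
  destruct (Req_dec x 0) as [->|Hx0]; [unfold gap in Hgap0; lra|].
  destruct (MVT_gen gap 0 x (fun y => y ^ S m / (1 - y))) as [c [Hc Hmvt]].
  - intros y Hy. apply Hgap'. rewrite Rmax_right in Hy; lra.
  - intros y Hy. rewrite Rmax_right in Hy by lra. apply continuity_pt_filterlim.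
    apply (ex_derive_continuous (K:=R_AbsRing) (V:=R_NormedModule)).
    eexists. apply Hgap'. lra.
  - rewrite Rmin_left, Rmax_right in Hc by lra.
    assert (0 <= c ^ S m / (1 - c)).
    { apply Rdiv_le_0_compat; [apply pow_le|]; lra. }
    unfold gap in Hmvt, Hgap0. rewrite Hgap0 in Hmvt. nra.
Qed.

Lemma sum_n_m_le_loc (a b : nat -> R) n m :
  (forall k, (n <= k <= m)%nat -> a k <= b k) -> sum_n_m a n m <= sum_n_m b n m.
Proof.
  intros H.
  rewrite (sum_n_m_ext_loc a (fun k => Rmin (a k) (b k))) by (intros; rewrite Rmin_left; auto).
  apply sum_n_m_le. intros; apply Rmin_r.
Qed.

(* The bound on [|s_n'(z) - 1| + |z s_n''(z)|] at [|z| = r] when [|a_k| <= 1 / (2 (k - 1))]. *)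
Definition convexity_majorant (n : nat) (r : R) : R :=
  sum_n_m (fun k => INR k ^ 2 * r ^ (k - 1) / (2 * (INR k - 1))) 2 n.

Lemma convexity_majorant_lt n r s : (2 <= n)%nat -> 0 <= r < s ->
  convexity_majorant n r < convexity_majorant n s.
Proof.
  intros Hn Hrs. unfold convexity_majorant.
  rewrite !(sum_Sn_m _ 2) by lia. change plus with Rplus.
  apply Rplus_lt_le_compat.
  - simpl. lra.
  - apply sum_n_m_le_loc. intros k [Hk _].
    assert (1 <= INR k - 1) by (apply (le_INR 3) in Hk; simpl in Hk; lra).
    assert (r ^ (k - 1) <= s ^ (k - 1)) by (apply pow_incr; lra).
    unfold Rdiv. apply Rmult_le_compat_r; [left; apply Rinv_0_lt_compat; lra|].
    apply Rmult_le_compat_l; [apply pow_le, pos_INR | assumption].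
Qed.

Lemma convexity_majorant_le_1 n x : 0 < x < 1 ->
  (1 - x) ^ 2 * ln (1 - x) + 2 - 7 * x + 4 * x ^ 2 = 0 ->
  convexity_majorant n x <= 1.
Proof.
  intros Hx Heq.
  destruct (Nat.le_gt_cases 2 n) as [Hn|Hn].
  2:{ unfold convexity_majorant. rewrite sum_n_m_zero by lia. exact Rle_0_1. }
  unfold convexity_majorant.
  rewrite (sum_n_m_ext_loc _ (fun k => (INR k * x ^ (k - 1) + x ^ (k - 1)
                                        + x ^ (k - 1) / (INR k - 1)) * / 2)).
  2:{ intros k [Hk _]. apply (le_INR 2) in Hk. simpl in *. field. lra. }
  rewrite (sum_n_m_mult_r (K:=R_Ring)), !(sum_n_m_plus (G:=R_AbelianMonoid)).
  change mult with Rmult. change plus with Rplus.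
  assert (Hlog : sum_n_m (fun k => x ^ (k - 1) / (INR k - 1)) 2 n <= - ln (1 - x)).
  { rewrite sum_n_m_from_2 by exact Hn.
    erewrite sum_n_ext; [apply sum_log_series_le; lra|]. intros j. cbv beta.
    replace (S (S j) - 1)%nat with (S j) by lia. rewrite (S_INR (S j)). f_equal. ring. }
  pose proof (sum_kpow_from_2_le x n ltac:(lra)).
  pose proof (sum_pow_from_2_le x n ltac:(lra)).
  assert (Hln : - ln (1 - x) = (2 - 7 * x + 4 * x ^ 2) / (1 - x) ^ 2).
  { field_simplify_eq; [lra | nra]. }
  assert (Htotal : / (1 - x) ^ 2 - 1 + x / (1 - x) + - ln (1 - x) = 2).
  { rewrite Hln. field. lra. }
  lra.
Qed.

Open Scope C_scope.

(* Coquelicot states equalities in the carrier of a structure such as [C_AbelianMonoid],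
   which [ring] and [field] do not recognise as [C]. *)
Ltac C_eq := match goal with |- ?x = ?y => change (@eq C x y) end; cbv beta.

Lemma Cmod_INR k : Cmod (INR k) = INR k.
Proof. rewrite Cmod_R. apply Rabs_pos_eq, pos_INR. Qed.

Lemma is_derive_C_iff (f : C -> C) z l :
  @is_derive C_AbsRing (AbsRing_NormedModule C_AbsRing) f z l <-> is_derive f z l.
Proof.
  split; intros [[Hlin1 Hlin2 Hlin3] Hdomin]; split; try exact Hdomin;
    constructor; assumption.
Qed.

Lemma is_derive_Cmult (f g : C -> C) z df dg :
  is_derive f z df -> is_derive g z dg ->
  is_derive (fun w => f w * g w) z (df * g z + f z * dg).
Proof.
  intros Hf Hg. apply is_derive_C_iff.
  apply (is_derive_mult (K:=C_AbsRing)); try apply is_derive_C_iff; auto.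
  intros; apply Cmult_comm.
Qed.

Lemma is_derive_Cpow k z : is_derive (fun w => w ^ k) z (INR k * z ^ (k - 1)).
Proof.
  induction k as [|k IH].
  - replace (INR 0 * z ^ (0 - 1)) with (RtoC 0) by (simpl; ring).
    apply (is_derive_const (K:=C_AbsRing) (V:=C_NormedModule) (RtoC 1)).
  - replace (INR (S k) * z ^ (S k - 1)) with (1 * z ^ k + z * (INR k * z ^ (k - 1))).
    + apply (is_derive_Cmult (fun w => w) (fun w => w ^ k)); [|exact IH].
      apply is_derive_C_iff, (is_derive_id (K:=C_AbsRing)).
    + destruct k as [|k]; [simpl; ring|].
      replace (S (S k) - 1)%nat with (S k) by lia. replace (S k - 1)%nat with k by lia.
      rewrite (S_INR (S k)), RtoC_plus. simpl. ring.
Qed.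

Lemma is_derive_monomial (c : C) k z :
  is_derive (fun w => c * w ^ k) z (c * INR k * z ^ (k - 1)).
Proof.
  replace (c * INR k * z ^ (k - 1)) with (0 * z ^ k + c * (INR k * z ^ (k - 1))) by ring.
  apply is_derive_Cmult; [|apply is_derive_Cpow].
  apply (is_derive_const (K:=C_AbsRing) (V:=C_NormedModule)).
Qed.

Definition partial_sum_deriv (a : nat -> C) (n : nat) (z : C) : C :=
  sum_n (fun k => a k * INR k * z ^ (k - 1)) n.

Definition partial_sum_deriv2 (a : nat -> C) (n : nat) (z : C) : C :=
  sum_n (fun k => a k * INR k * INR (k - 1) * z ^ (k - 2)) n.

Lemma is_derive_partial_sum a n z : is_derive (partial_sum a n) z (partial_sum_deriv a n z).
Proof.
  apply (is_derive_sum_n (K:=C_AbsRing) (V:=C_NormedModule)). intros k _.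
  eapply is_derive_ext; [|apply is_derive_monomial]. intros w. cbv beta.
  f_equal.
Qed.

Lemma is_derive_partial_sum_deriv a n z :
  is_derive (partial_sum_deriv a n) z (partial_sum_deriv2 a n z).
Proof.
  apply (is_derive_sum_n (K:=C_AbsRing) (V:=C_NormedModule)). intros k _.
  replace (k - 2)%nat with (k - 1 - 1)%nat by lia. apply is_derive_monomial.
Qed.

Lemma sum_n_split_2 {G : AbelianMonoid} (F : nat -> G) n : (1 <= n)%nat ->
  sum_n F n = plus (plus (F 0%nat) (F 1%nat)) (sum_n_m F 2 n).
Proof.
  intros Hn. unfold sum_n. rewrite (sum_n_m_Chasles F 0 1 n) by lia.
  now rewrite sum_n_Sm, sum_n_n by lia.
Qed.

Lemma partial_sum_derivatives_bound (a : nat -> C) n z :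
  a 0%nat = 0 -> a 1%nat = 1 -> (1 <= n)%nat ->
  (Cmod (partial_sum_deriv a n z - 1) + Cmod (z * partial_sum_deriv2 a n z) <=
   sum_n_m (fun k => INR k ^ 2 * Cmod (a k) * Cmod z ^ (k - 1)) 2 n)%R.
Proof.
  intros Ha0 Ha1 Hn.
  assert (Hd1 : partial_sum_deriv a n z - 1 = sum_n_m (fun k => a k * INR k * z ^ (k - 1)) 2 n).
  { unfold partial_sum_deriv. rewrite sum_n_split_2 by exact Hn.
    change plus with Cplus. rewrite Ha0, Ha1. simpl. ring. }
  assert (Hd2 : z * partial_sum_deriv2 a n z =
                sum_n_m (fun k => a k * INR k * INR (k - 1) * z ^ (k - 1)) 2 n).
  { unfold partial_sum_deriv2. rewrite sum_n_split_2 by exact Hn.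
    change plus with Cplus. rewrite Cmult_plus_distr_l.
    rewrite <- (sum_n_m_mult_l (K:=C_Ring)). change mult with Cmult.
    rewrite (sum_n_m_ext_loc _ (fun k => a k * INR k * INR (k - 1) * z ^ (k - 1))).
    - simpl. ring.
    - intros k [Hk _]. replace (k - 1)%nat with (S (k - 2)) by lia. simpl. ring. }
  rewrite Hd1, Hd2.
  eapply Rle_trans;
    [apply Rplus_le_compat; apply (norm_sum_n_m (K:=C_AbsRing) (V:=C_NormedModule))|].
  rewrite <- (sum_n_m_plus (G:=R_AbelianMonoid)).
  apply Req_le, (sum_n_m_ext_loc (G:=R_AbelianMonoid)).
  intros k [Hk _]. change norm with Cmod. change plus with Rplus. cbv beta.
  rewrite !Cmod_mult, Cmod_pow, !Cmod_INR, minus_INR by lia. simpl. ring.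
Qed.

Lemma convexity_criterion (u v : C) : (Cmod (u - 1) + Cmod v < 1)%R ->
  u <> 0 /\ (0 < Re (1 + v / u))%R.
Proof.
  intros H.
  assert (Hu : (1 - Cmod (u - 1) <= Cmod u)%R).
  { pose proof (Cmod_triangle (- (u - 1)) u) as Htri.
    rewrite Cmod_opp in Htri. replace (- (u - 1) + u) with (RtoC 1) in Htri by ring.
    rewrite Cmod_1 in Htri. lra. }
  assert (Hu0 : u <> 0).
  { intros E. rewrite E, Cmod_0 in Hu. rewrite E in H. pose proof (Cmod_ge_0 v). lra. }
  split; [exact Hu0|].
  assert (Hvu : (Cmod (v / u) < 1)%R).
  { assert (0 < Cmod u) by (apply Cmod_gt_0; exact Hu0).
    rewrite Cmod_div by exact Hu0. apply (Rdiv_lt_1 _ _ H0). lra. }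
  pose proof (re_le_Cmod (v / u)) as Hre. apply Rabs_le_between in Hre.
  rewrite re_plus, re_RtoC. lra.
Qed.

Lemma partial_sum_convex (a : nat -> C) (rK : R) n :
  a 0%nat = 0 -> a 1%nat = 1 ->
  (forall k, (2 <= k)%nat -> (Cmod (a k) <= / (2 * (INR k - 1)))%R) ->
  (0 < rK < 1)%R ->
  ((1 - rK) ^ 2 * ln (1 - rK) + 2 - 7 * rK + 4 * rK ^ 2 = 0)%R ->
  (2 <= n)%nat -> convex_in_disk rK (partial_sum a n).
Proof.
  intros Ha0 Ha1 Ha HrK Heq Hn.
  exists (partial_sum_deriv a n), (partial_sum_deriv2 a n). intros z Hz.
  assert (Hmajorant : (sum_n_m (fun k => INR k ^ 2 * Cmod (a k) * Cmod z ^ (k - 1)) 2 n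
                       <= convexity_majorant n (Cmod z))%R).
  { apply sum_n_m_le_loc. intros k [Hk _].
    replace (INR k ^ 2 * Cmod z ^ (k - 1) / (2 * (INR k - 1)))%R
      with (INR k ^ 2 * / (2 * (INR k - 1)) * Cmod z ^ (k - 1))%R by (unfold Rdiv; ring).
    apply Rmult_le_compat_r; [apply pow_le, Cmod_ge_0|].
    apply Rmult_le_compat_l; [apply pow2_ge_0 | exact (Ha k Hk)]. }
  destruct (convexity_criterion (partial_sum_deriv a n z) (z * partial_sum_deriv2 a n z))
    as [Hd1 Hre].
  { pose proof (partial_sum_derivatives_bound a n z Ha0 Ha1 ltac:(lia)).
    pose proof (convexity_majorant_lt n (Cmod z) rK Hn (conj (Cmod_ge_0 z) Hz)).
    pose proof (convexity_majorant_le_1 n rK HrK Heq).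
    lra. }
  split; [apply is_derive_partial_sum|].
  split; [apply is_derive_partial_sum_deriv|].
  split; assumption.
Qed.

Lemma is_series_terms_bounded (c : nat -> C) l :
  is_series c l -> exists M, (0 <= M)%R /\ forall k, (Cmod (c k) <= M)%R.
Proof.
  intros Hc.
  destruct (filterlim_bounded (K:=C_AbsRing) (V:=C_NormedModule) (sum_n c)) as [M HM];
    [exists l; exact Hc|].
  change norm with Cmod in HM.
  exists (2 * M)%R. pose proof (Cmod_ge_0 (sum_n c 0)).
  split; [pose proof (HM 0%nat); lra|]. intros [|k].
  - pose proof (HM 0%nat). rewrite sum_O in *. lra.
  - pose proof (HM (S k)) as H1. pose proof (HM k) as H2. rewrite sum_Sn in H1.
    change plus with Cplus in H1.
    pose proof (Cmod_triangle (sum_n c k + c (S k)) (- sum_n c k)) as Htri.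
    rewrite Cmod_opp in Htri. replace (sum_n c k + c (S k) + - sum_n c k) with (c (S k)) in Htri
      by ring.
    lra.
Qed.

Lemma is_series_Cmod_le (c : nat -> C) (d : nat -> R) l L :
  is_series c l -> (forall k, (Cmod (c k) <= d k)%R) -> is_series d L -> (Cmod l <= L)%R.
Proof.
  intros Hc Hd HL.
  assert (Hpartial : forall n, (Cmod (sum_n c n) <= sum_n d n)%R).
  { intros n. eapply Rle_trans; [apply (norm_sum_n_m (K:=C_AbsRing) (V:=C_NormedModule))|].
    apply sum_n_m_le. exact Hd. }
  assert (Hlim : is_lim_seq (fun n => Cmod (sum_n c n)) (Cmod l)).
  { apply (filterlim_comp _ _ _ (sum_n c) Cmod _ _ _ Hc).
    exact (filterlim_norm (K:=C_AbsRing) (V:=C_NormedModule) l). }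
  exact (is_lim_seq_le _ _ _ _ Hpartial Hlim (HL : is_lim_seq (sum_n d) L)).
Qed.

Lemma is_series_geometric_tail_le (v : nat -> C) l (K q : R) n :
  (0 <= q < 1)%R -> is_series (fun k => v (n + k)%nat) l ->
  (forall k, (Cmod (v k) <= K * q ^ k)%R) -> (Cmod l <= K * q ^ n / (1 - q))%R.
Proof.
  intros Hq Hl Hv. apply (is_series_Cmod_le _ (fun k => K * q ^ n * q ^ k)%R _ _ Hl).
  - intros k. rewrite Rmult_assoc, <- pow_add. apply Hv.
  - apply (is_series_scal (K:=R_AbsRing) (V:=R_NormedModule) (K * q ^ n)%R).
    apply is_series_geom. rewrite Rabs_pos_eq; lra.
Qed.

Lemma is_series_sum_n {K : AbsRing} {V : NormedModule K} (F : nat -> nat -> V) (G : nat -> V) N :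
  (forall j, is_series (F j) (G j)) ->
  is_series (fun k => sum_n (fun j => F j k) N) (sum_n G N).
Proof.
  intros HF. induction N as [|N IH].
  - rewrite sum_O. eapply is_series_ext; [|apply (HF 0%nat)]. intros k. now rewrite sum_O.
  - rewrite sum_Sn. eapply is_series_ext; [|apply (is_series_plus _ _ _ _ IH (HF (S N)))].
    intros k. now rewrite sum_Sn.
Qed.

Lemma sum_n_single {G : AbelianMonoid} (v : nat -> G) m N : (m <= N)%nat ->
  (forall k, (k <= N)%nat -> k <> m -> v k = zero) -> sum_n v N = v m.
Proof.
  induction 1 as [|N HmN IH]; intros Hv.
  - destruct m as [|m]; [apply sum_O|].
    rewrite sum_Sn, (sum_n_ext_loc _ (fun _ => zero)).
    + unfold sum_n. rewrite sum_n_m_const_zero. apply plus_zero_l.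
    + intros k Hk. apply Hv; lia.
  - rewrite sum_Sn, IH by (intros; apply Hv; lia).
    rewrite (Hv (S N)) by lia. apply plus_zero_r.
Qed.

Definition root_of_unity (N : nat) : C := (cos (2 * PI / INR N), sin (2 * PI / INR N)).

Lemma root_of_unity_pow N p : (1 <= N)%nat ->
  root_of_unity N ^ p = (cos (2 * PI * INR p / INR N), sin (2 * PI * INR p / INR N)).
Proof.
  intros HN. assert (HN0 : INR N <> 0%R) by (apply not_0_INR; lia).
  induction p as [|p IH].
  - simpl. replace (2 * PI * 0 / INR N)%R with 0%R by (field; auto).
    rewrite cos_0, sin_0. reflexivity.
  - rewrite Cpow_S, IH. unfold root_of_unity, Cmult. simpl fst; simpl snd.
    replace (2 * PI * INR (S p) / INR N)%R with (2 * PI / INR N + 2 * PI * INR p / INR N)%R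
      by (rewrite S_INR; field; auto).
    rewrite cos_plus, sin_plus. f_equal; ring.
Qed.

Lemma Cmod_root_of_unity N : Cmod (root_of_unity N) = 1%R.
Proof.
  unfold Cmod, root_of_unity. simpl fst; simpl snd.
  rewrite <- sqrt_1. f_equal. pose proof (sin2_cos2 (2 * PI / INR N)) as H.
  unfold Rsqr in H. lra.
Qed.

Lemma root_of_unity_pow_order N : (1 <= N)%nat -> root_of_unity N ^ N = 1.
Proof.
  intros HN. rewrite root_of_unity_pow by exact HN.
  replace (2 * PI * INR N / INR N)%R with (2 * PI)%R by (field; apply not_0_INR; lia).
  rewrite cos_2PI, sin_2PI. reflexivity.
Qed.

Lemma root_of_unity_pow_neq_1 N p : (0 < p < N)%nat -> root_of_unity N ^ p <> 1.
Proof.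
  intros Hp E. rewrite root_of_unity_pow in E by lia.
  assert (Hth : (0 < 2 * PI * INR p / INR N < 2 * PI)%R).
  { assert (0 < INR p < INR N)%R by (split; [apply lt_0_INR | apply lt_INR]; lia).
    pose proof PI_RGT_0. split.
    - apply Rdiv_lt_0_compat; [apply Rmult_lt_0_compat|]; lra.
    - apply Rlt_div_l; [lra|]. apply Rmult_lt_compat_l; lra. }
  set (th := (2 * PI * INR p / INR N)%R) in *.
  assert (Hs : sin th = 0%R) by exact (f_equal snd E).
  assert (Hc : cos th = 1%R) by exact (f_equal fst E).
  destruct (sin_eq_0_0 th Hs) as [k Hk].
  pose proof PI_RGT_0.
  assert (k = 1%Z).
  { rewrite Hk in Hth. destruct Hth as [Hlo Hhi].
    assert (0 < IZR k)%R by (apply (Rmult_lt_reg_r PI); lra).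
    assert (IZR k < 2)%R by (apply (Rmult_lt_reg_r PI); lra).
    apply lt_IZR in H0. apply lt_IZR in H1. lia. }
  subst k. rewrite Hk, Rmult_1_l, cos_PI in Hc. lra.
Qed.

Lemma sum_n_pow_eq_0 (x : C) N :
  x ^ S N = 1 -> x <> 1 -> (sum_n (fun j => x ^ j) N : C) = 0.
Proof.
  intros Hx1 Hx.
  assert (Hgeom : (x - 1) * sum_n (fun j => x ^ j) N = x ^ S N - 1).
  { clear Hx1. induction N as [|N IH]; [rewrite sum_O; simpl; ring|].
    rewrite sum_Sn. change plus with Cplus. rewrite Cmult_plus_distr_l, IH. simpl. ring. }
  rewrite Hx1 in Hgeom.
  assert (Hx0 : x - 1 <> 0) by (intros E; apply Hx, Ceq_minus, E).
  assert (Hreg : forall s : C, (x - 1) * s = 0 -> s = 0).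
  { intros s Hs. transitivity (/ (x - 1) * ((x - 1) * s)); [field; exact Hx0|].
    rewrite Hs. ring. }
  apply Hreg. rewrite Hgeom. ring.
Qed.

(* [1/(N+1) sum_(j <= N) zeta^(j (k - m))] for a primitive [(N+1)]-th root of unity [zeta]:
   [1] if [k = m] modulo [N+1] and [0] otherwise; the exponent is shifted by [N+1] to avoid
   truncated subtraction. *)
Definition root_filter (N m k : nat) : C :=
  sum_n (fun j => (root_of_unity (S N) ^ (k + (S N - m))) ^ j) N / INR (S N).

Lemma RtoC_INR_S_neq_0 N : RtoC (INR (S N)) <> 0.
Proof. intros E. apply RtoC_inj in E. revert E. apply not_0_INR. lia. Qed.

Lemma root_filter_diag N m : (m <= S N)%nat -> root_filter N m m = 1.
Proof.
  intros Hm. unfold root_filter.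
  replace (m + (S N - m))%nat with (S N) by lia.
  rewrite root_of_unity_pow_order by lia.
  assert (Hsum : forall n, (sum_n (fun j => 1 ^ j) n : C) = INR (S n)).
  { induction n as [|n IH]; [now rewrite sum_O|].
    rewrite sum_Sn, IH, Cpow_1_l, (S_INR (S n)), RtoC_plus. reflexivity. }
  rewrite Hsum. field. apply RtoC_INR_S_neq_0.
Qed.

Lemma root_filter_off_diag N m k : (m <= N)%nat -> k <> m -> (k < m + S N)%nat ->
  root_filter N m k = 0.
Proof.
  intros Hm Hkm Hk. unfold root_filter.
  set (zeta := root_of_unity (S N)).
  assert (Hzeta : zeta ^ S N = 1) by (apply root_of_unity_pow_order; lia).
  rewrite sum_n_pow_eq_0; [unfold Cdiv; ring| |].
  - rewrite <- Cpow_mult_r, Nat.mul_comm, Cpow_mult_r, Hzeta. apply Cpow_1_l.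
  - destruct (Nat.lt_ge_cases k m) as [Hlt|Hge].
    + apply root_of_unity_pow_neq_1. lia.
    + replace (k + (S N - m))%nat with ((k - m) + S N)%nat by lia.
      rewrite Cpow_add_r, Hzeta, Cmult_1_r. apply root_of_unity_pow_neq_1. lia.
Qed.

Lemma Cmod_root_filter_le N m k : (Cmod (root_filter N m k) <= 1)%R.
Proof.
  unfold root_filter. rewrite Cmod_div by apply RtoC_INR_S_neq_0. rewrite Cmod_INR.
  apply (Rdiv_le_1 _ _ (lt_0_INR _ (Nat.lt_0_succ N))).
  eapply Rle_trans; [apply (norm_sum_n_m (K:=C_AbsRing) (V:=C_NormedModule))|].
  change norm with Cmod.
  rewrite (sum_n_m_ext _ (fun _ => 1%R)), sum_n_m_const.
  - rewrite Nat.sub_0_r. lra.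
  - intros j. rewrite !Cmod_pow, Cmod_root_of_unity, !pow1. reflexivity.
Qed.

Lemma root_filter_average N m k :
  sum_n (fun j => (root_of_unity (S N) ^ j) ^ k * (root_of_unity (S N) ^ j) ^ (S N - m)) N
    / INR (S N) = root_filter N m k.
Proof.
  unfold root_filter. f_equal. apply sum_n_ext. intros j.
  rewrite <- !Cpow_mult_r, <- Cpow_add_r. f_equal. ring.
Qed.

Section CoefficientBound.

Variables (b : nat -> C) (g : C -> C) (M : R).
Hypothesis g_series : forall w, (Cmod w < 1)%R -> is_series (fun k => b k * w ^ k) (g w).
Hypothesis g_bounded : forall w, (Cmod w < 1)%R -> (Cmod (g w) <= M)%R.

Lemma root_filter_series (r : R) N m : (0 <= r < 1)%R ->
  exists S, is_series (fun k => b k * r ^ k * root_filter N m k) S /\ (Cmod S <= M)%R.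
Proof.
  intros Hr.
  set (zeta := root_of_unity (S N)).
  set (weight := fun j => (zeta ^ j) ^ (S N - m) / INR (S N)).
  assert (Hw : forall j, (Cmod (r * zeta ^ j) < 1)%R).
  { intros j. unfold zeta.
    rewrite Cmod_mult, Cmod_pow, Cmod_root_of_unity, pow1, Cmod_R, Rabs_pos_eq; lra. }
  exists (sum_n (fun j => weight j * g (r * zeta ^ j)) N). split.
  - eapply is_series_ext;
      [|apply (is_series_sum_n (fun j k => weight j * (b k * (r * zeta ^ j) ^ k)))].
    + intros k. C_eq. rewrite <- root_filter_average. fold zeta.
      transitivity (sum_n (fun j => b k * r ^ k / INR (S N)
                                    * ((zeta ^ j) ^ k * (zeta ^ j) ^ (S N - m))) N).
      * apply sum_n_ext. intros j. unfold weight, Cdiv. rewrite Cpow_mult_l. C_eq. ring.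
      * transitivity (b k * r ^ k / INR (S N)
                      * sum_n (fun j => (zeta ^ j) ^ k * (zeta ^ j) ^ (S N - m)) N).
        -- apply (sum_n_mult_l (K:=C_Ring)).
        -- unfold Cdiv. ring.
    + intros j. apply (is_series_scal (K:=C_AbsRing) (V:=C_NormedModule)), g_series, Hw.
  - assert (HN : (0 < INR (S N))%R) by (apply lt_0_INR; lia).
    eapply Rle_trans; [apply (norm_sum_n_m (K:=C_AbsRing) (V:=C_NormedModule))|].
    eapply Rle_trans; [apply (sum_n_m_le _ (fun _ => M / INR (S N))%R)|].
    + intros j. change norm with Cmod. unfold weight, zeta.
      rewrite Cmod_mult, Cmod_div, !Cmod_pow, Cmod_root_of_unity, !pow1, Cmod_INR
        by apply RtoC_INR_S_neq_0.
      unfold Rdiv. rewrite Rmult_1_l, Rmult_comm. apply Rmult_le_compat_r.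
      * left. apply Rinv_0_lt_compat, HN.
      * apply g_bounded, Hw.
    + rewrite sum_n_m_const, Nat.sub_0_r. right. field. lra.
Qed.

Lemma coefficient_geometric_bound (r : R) : (0 <= r < 1)%R ->
  exists K q, (0 <= K)%R /\ (0 <= q < 1)%R /\ forall k, (Cmod (b k) * r ^ k <= K * q ^ k)%R.
Proof.
  intros Hr.
  set (s := ((1 + r) / 2)%R).
  assert (Hs : (0 < s /\ r < s < 1)%R) by (unfold s; lra).
  destruct (is_series_terms_bounded _ _ (g_series s ltac:(rewrite Cmod_R, Rabs_pos_eq; lra)))
    as [K [HK0 HK]].
  exists K, (r / s)%R. split; [exact HK0|]. split.
  { split; [apply Rdiv_le_0_compat; lra|]. apply (Rdiv_lt_1 _ _ (proj1 Hs)). lra. }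
  intros k. specialize (HK k). rewrite Cmod_mult, Cmod_pow, Cmod_R, Rabs_pos_eq in HK by lra.
  replace (r ^ k)%R with (s ^ k * (r / s) ^ k)%R
    by (rewrite <- Rpow_mult_distr; f_equal; field; lra).
  rewrite <- Rmult_assoc. apply Rmult_le_compat_r; [apply pow_le, Rdiv_le_0_compat; lra | exact HK].
Qed.

(* The filtered series agrees with [b m r^m] up to its terms of index [>= m + S N]. *)
Lemma root_filter_tail_le (r K q : R) N m avg :
  (0 <= r)%R -> (0 <= q < 1)%R -> (m <= N)%nat ->
  (forall k, (Cmod (b k) * r ^ k <= K * q ^ k)%R) ->
  is_series (fun k => b k * r ^ k * root_filter N m k) avg ->
  (Cmod (avg - b m * r ^ m) <= K * q ^ (m + S N) / (1 - q))%R.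
Proof.
  intros Hr Hq HmN Hdecay Havg.
  set (v := fun k => b k * r ^ k * root_filter N m k).
  assert (Hhead : sum_n v (m + N) = b m * r ^ m).
  { rewrite (sum_n_single v m); [unfold v; rewrite root_filter_diag by lia; apply Cmult_1_r|lia|].
    intros k Hk Hkm. unfold v. rewrite root_filter_off_diag by lia. apply Cmult_0_r. }
  apply (is_series_geometric_tail_le v).
  - exact Hq.
  - apply is_series_incr_n; [lia|]. replace (Nat.pred (m + S N)) with (m + N)%nat by lia.
    assert (E : avg - b m * r ^ m + sum_n v (m + N) = avg) by (rewrite Hhead; ring).
    rewrite <- E in Havg. exact Havg.
  - intros k. unfold v. rewrite !Cmod_mult, Cmod_pow, Cmod_R, Rabs_pos_eq by lra.
    eapply Rle_trans; [|apply Hdecay].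
    rewrite <- (Rmult_1_r (Cmod (b k) * r ^ k)) at 2.
    apply Rmult_le_compat_l; [apply Rmult_le_pos; [apply Cmod_ge_0 | apply pow_le; lra]|].
    apply Cmod_root_filter_le.
Qed.

Lemma coefficient_bound_radius (r : R) m : (0 <= r < 1)%R -> (Cmod (b m) * r ^ m <= M)%R.
Proof.
  intros Hr.
  destruct (coefficient_geometric_bound r Hr) as (K & q & HK0 & Hq & Hdecay).
  apply le_epsilon. intros eps Heps.
  destruct (pow_lt_1_zero q ltac:(rewrite Rabs_pos_eq; lra) (eps * (1 - q) / (K + 1))%R)
    as [N0 HN0]; [apply Rdiv_lt_0_compat; nra|].
  set (N := Nat.max N0 m).
  destruct (root_filter_series r N m Hr) as [avg [Havg HavgM]].
  pose proof (root_filter_tail_le r K q N m avg (proj1 Hr) Hq (Nat.le_max_r _ _) Hdecay Havg)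
    as Htail.
  assert (Hsmall : (K * q ^ (m + S N) / (1 - q) <= eps)%R).
  { specialize (HN0 N0 (Nat.le_refl _)). rewrite Rabs_pos_eq in HN0 by (apply pow_le; lra).
    assert (Hqn : (q ^ (m + S N) <= q ^ N0)%R).
    { replace (m + S N)%nat with (N0 + (m + S N - N0))%nat by lia. rewrite pow_add.
      pose proof (pow_le_1 q (m + S N - N0) ltac:(lra)).
      pose proof (pow_le q N0 (proj1 Hq)). nra. }
    apply Rle_div_l; [lra|]. apply Rlt_div_r in HN0; [|lra].
    pose proof (pow_le q (m + S N) (proj1 Hq)). nra. }
  replace (Cmod (b m) * r ^ m)%R with (Cmod (b m * r ^ m))
    by (rewrite Cmod_mult, Cmod_pow, Cmod_R, Rabs_pos_eq by lra; reflexivity).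
  replace (b m * r ^ m) with (avg - (avg - b m * r ^ m)) by ring.
  eapply Rle_trans; [apply Cmod_triangle|]. rewrite Cmod_opp. lra.
Qed.

Lemma pow_one_minus_ge (e : R) m : (0 <= e <= 1)%R -> (1 - INR m * e <= (1 - e) ^ m)%R.
Proof.
  intros He. induction m as [|m IH]; [simpl; lra|].
  rewrite S_INR. simpl. pose proof (pos_INR m).
  assert (0 <= (1 - e) ^ m)%R by (apply pow_le; lra). nra.
Qed.

Lemma coefficient_bound m : (Cmod (b m) <= M)%R.
Proof.
  set (B := Cmod (b m)). assert (HB : (0 <= B)%R) by apply Cmod_ge_0.
  pose proof (pos_INR m) as Hm.
  apply le_epsilon. intros eps Heps.
  set (e := Rmin (1 / 2) (eps / (B * INR m + 1))).
  assert (He : (0 < e <= 1 / 2)%R).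
  { split; [apply Rmin_pos; [lra | apply Rdiv_lt_0_compat; nra] | apply Rmin_l]. }
  assert (HBe : (B * INR m * e <= eps)%R).
  { assert (e <= eps / (B * INR m + 1))%R by apply Rmin_r.
    apply Rle_div_r in H; [|nra]. nra. }
  pose proof (coefficient_bound_radius (1 - e) m ltac:(lra)).
  pose proof (pow_one_minus_ge e m ltac:(lra)). fold B in H. nra.
Qed.

End CoefficientBound.

Lemma INR_mul_pow_le (x : R) k : (0 <= x < 1)%R -> (INR k * x ^ k <= / (1 - x))%R.
Proof.
  intros Hx.
  assert (H : (INR k * x ^ k * (1 - x) <= 1 - x ^ k)%R).
  { induction k as [|k IH]; [simpl; lra|].
    rewrite S_INR. simpl.
    assert (0 <= x ^ k <= 1)%R by (split; [apply pow_le; lra | apply pow_le_1; lra]).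
    assert (x * (INR k * x ^ k * (1 - x)) <= x * (1 - x ^ k))%R
      by (apply Rmult_le_compat_l; lra).
    assert (0 <= (1 - x) * (1 - x * x ^ k))%R by (apply Rmult_le_pos; nra).
    nra. }
  apply (Rmult_le_reg_r (1 - x)); [lra|]. rewrite Rinv_l by lra.
  pose proof (pow_le x k (proj1 Hx)). lra.
Qed.

Lemma power_series_coef_decay (a : nat -> C) (s rho M : R) :
  (0 < rho < s)%R -> (forall k, (Cmod (a k) * s ^ k <= M)%R) ->
  exists K q, (0 <= q < 1)%R /\ forall k, (Cmod (a k) * (INR k ^ 2 * rho ^ k) <= K * q ^ k)%R.
Proof.
  intros Hrho Ha.
  set (t1 := (rho + (s - rho) / 3)%R). set (t2 := (rho + 2 * (s - rho) / 3)%R).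
  set (q1 := (rho / t1)%R). set (q2 := (t1 / t2)%R). set (q3 := (t2 / s)%R).
  assert (Hq : forall x y, (0 < x < y)%R -> (0 <= x / y < 1)%R).
  { intros x y Hxy. split; [apply Rdiv_le_0_compat; lra|]. apply (Rdiv_lt_1 x y ltac:(lra)). lra. }
  assert (Hq1 : (0 <= q1 < 1)%R) by (apply Hq; unfold t1; lra).
  assert (Hq2 : (0 <= q2 < 1)%R) by (apply Hq; unfold t1, t2; lra).
  assert (Hq3 : (0 <= q3 < 1)%R) by (apply Hq; unfold t2; lra).
  exists (/ (1 - q1) * / (1 - q2) * M)%R, q3. split; [exact Hq3|]. intros k.
  replace (rho ^ k)%R with (q1 ^ k * q2 ^ k * q3 ^ k * s ^ k)%R
    by (rewrite <- !Rpow_mult_distr; f_equal; unfold q1, q2, q3; field; unfold t1, t2; lra).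
  replace (Cmod (a k) * (INR k ^ 2 * (q1 ^ k * q2 ^ k * q3 ^ k * s ^ k)))%R with
    ((INR k * q1 ^ k) * (INR k * q2 ^ k) * (Cmod (a k) * s ^ k) * q3 ^ k)%R by ring.
  pose proof (INR_mul_pow_le q1 k Hq1). pose proof (INR_mul_pow_le q2 k Hq2).
  assert (0 <= INR k * q1 ^ k)%R by (apply Rmult_le_pos; [apply pos_INR | apply pow_le; lra]).
  assert (0 <= INR k * q2 ^ k)%R by (apply Rmult_le_pos; [apply pos_INR | apply pow_le; lra]).
  assert (0 <= Cmod (a k) * s ^ k)%R
    by (apply Rmult_le_pos; [apply Cmod_ge_0 | apply pow_le; unfold t1, t2 in *; lra]).
  apply Rmult_le_compat_r; [apply pow_le; lra|].
  apply Rmult_le_compat; [apply Rmult_le_pos; assumption | assumption | | apply Ha].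
  apply Rmult_le_compat; assumption.
Qed.

Lemma Cpow_taylor_remainder_le (y z : C) (rho : R) k :
  (Cmod y <= rho)%R -> (Cmod z <= rho)%R ->
  (rho ^ 2 * Cmod (y ^ k - z ^ k - (y - z) * (INR k * z ^ (k - 1))) <=
   INR k ^ 2 * rho ^ k * Cmod (y - z) ^ 2)%R.
Proof.
  intros Hy Hz.
  assert (Hrho : (0 <= rho)%R) by (pose proof (Cmod_ge_0 y); lra).
  set (h := y - z). pose proof (Cmod_ge_0 h) as Hh.
  induction k as [|[|k] IH].
  - replace (y ^ 0 - z ^ 0 - h * (INR 0 * z ^ (0 - 1))) with (RtoC 0) by (simpl; ring).
    rewrite Cmod_0. simpl. lra.
  - replace (y ^ 1 - z ^ 1 - h * (INR 1 * z ^ (1 - 1))) with (RtoC 0) by (unfold h; simpl; ring).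
    rewrite Cmod_0. simpl. nra.
  - replace (S (S k) - 1)%nat with (S k) by lia. replace (S k - 1)%nat with k in IH by lia.
    set (E := y ^ S k - z ^ S k - h * (INR (S k) * z ^ k)) in IH.
    (* the remainder for [k+2] is [y] times the one for [k+1] plus [(k+1) z^k h^2] *)
    assert (Hrec : (Cmod (y ^ S (S k) - z ^ S (S k) - h * (INR (S (S k)) * z ^ S k))
                    <= rho * Cmod E + INR (S k) * rho ^ k * Cmod h ^ 2)%R).
    { replace (y ^ S (S k) - z ^ S (S k) - h * (INR (S (S k)) * z ^ S k))
        with (y * E + INR (S k) * z ^ k * (h * h))
        by (unfold E, h; rewrite (S_INR (S k)), RtoC_plus; simpl; ring).
      eapply Rle_trans; [apply Cmod_triangle|].
      rewrite !Cmod_mult, Cmod_INR, Cmod_pow. simpl (Cmod h ^ 2)%R. rewrite Rmult_1_r.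
      pose proof (pos_INR (S k)). pose proof (Cmod_ge_0 E).
      assert (Cmod z ^ k <= rho ^ k)%R by (apply pow_incr; split; [apply Cmod_ge_0 | exact Hz]).
      apply Rplus_le_compat; [apply Rmult_le_compat_r; assumption|].
      apply Rmult_le_compat_r; [nra|]. apply Rmult_le_compat_l; assumption. }
    set (P := (rho ^ S (S k) * Cmod h ^ 2)%R).
    assert (HP : (0 <= P)%R) by (apply Rmult_le_pos; apply pow_le; lra).
    assert (Hold : (rho * (rho ^ 2 * Cmod E) <= INR (S k) ^ 2 * P)%R).
    { unfold P. replace (INR (S k) ^ 2 * (rho ^ S (S k) * Cmod h ^ 2))%R
        with (rho * (INR (S k) ^ 2 * rho ^ S k * Cmod h ^ 2))%R by (simpl; ring).
      apply Rmult_le_compat_l; assumption. }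
    assert (Hnew : (rho ^ 2 * (INR (S k) * rho ^ k * Cmod h ^ 2) = INR (S k) * P)%R)
      by (unfold P; simpl; ring).
    assert (Hcoef : (INR (S k) ^ 2 * P + INR (S k) * P <= INR (S (S k)) ^ 2 * P)%R).
    { rewrite (S_INR (S k)). pose proof (pos_INR (S k)). nra. }
    apply Rmult_le_compat_l with (r := (rho ^ 2)%R) in Hrec; [|apply pow_le; lra].
    rewrite Rmult_plus_distr_l, Hnew in Hrec.
    replace (rho ^ 2 * (rho * Cmod E))%R with (rho * (rho ^ 2 * Cmod E))%R in Hrec by ring.
    replace (INR (S (S k)) ^ 2 * rho ^ S (S k) * Cmod h ^ 2)%R with (INR (S (S k)) ^ 2 * P)%R
      by (unfold P; ring).
    lra.
Qed.

Lemma derive_eq_of_quadratic_remainder (f : C -> C) z D df (delta L : R) :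
  (0 < delta)%R -> (0 <= L)%R -> is_derive f z df ->
  (forall y, (Cmod (y - z) < delta)%R ->
     (Cmod (f y - f z - (y - z) * D) <= L * Cmod (y - z) ^ 2)%R) ->
  D = df.
Proof.
  intros Hdelta HL Hdf Hquad.
  destruct (Ceq_dec D df) as [E|Hne]; [exact E|exfalso].
  set (eps := (Cmod (D - df) / 4)%R).
  assert (Heps : (0 < eps)%R).
  { unfold eps. apply Rdiv_lt_0_compat; [|lra].
    apply Cmod_gt_0. intros E. apply Hne, Ceq_minus, E. }
  destruct Hdf as [_ Hdf].
  destruct (Hdf z (fun P HP => HP) (mkposreal eps Heps)) as [delta' Hdelta']. simpl in Hdelta'.
  pose proof (cond_pos delta') as Hdelta'0.
  set (h := (Rmin (Rmin delta (eps / (L + 1))) delta' / 2)%R).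
  assert (Hh : (0 < h /\ h < delta /\ h <= eps / (L + 1) /\ h < delta')%R).
  { assert (0 < eps / (L + 1))%R by (apply Rdiv_lt_0_compat; lra).
    pose proof (Rmin_l (Rmin delta (eps / (L + 1))) delta').
    pose proof (Rmin_r (Rmin delta (eps / (L + 1))) delta').
    pose proof (Rmin_l delta (eps / (L + 1))). pose proof (Rmin_r delta (eps / (L + 1))).
    assert (0 < Rmin (Rmin delta (eps / (L + 1))) delta')%R
      by (repeat apply Rmin_pos; lra).
    unfold h. lra. }
  set (y := z + RtoC h).
  assert (Hyz : Cmod (y - z) = h) by (unfold y; replace (z + h - z) with (RtoC h) by ring;
                                       rewrite Cmod_R, Rabs_pos_eq; lra).
  assert (H1 : (Cmod (f y - f z - (y - z) * df) <= eps * h)%R).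
  { rewrite <- Hyz. apply (Hdelta' y).
    apply (norm_compat1 (K:=C_AbsRing) (V:=AbsRing_NormedModule C_AbsRing)).
    change (Cmod (y - z) < delta')%R. lra. }
  assert (H2 : (Cmod (f y - f z - (y - z) * D) <= eps * h)%R).
  { eapply Rle_trans; [apply Hquad; lra|]. rewrite Hyz.
    assert (L * h <= eps)%R.
    { apply Rle_trans with ((L + 1) * h)%R; [nra|].
      destruct Hh as (_ & _ & Hh & _). apply Rle_div_r in Hh; lra. }
    nra. }
  assert (H3 : (h * Cmod (D - df) <= 2 * eps * h)%R).
  { rewrite <- Hyz at 1. rewrite <- Cmod_mult.
    replace ((y - z) * (D - df)) with ((f y - f z - (y - z) * df) - (f y - f z - (y - z) * D))
      by ring.
    unfold Cminus at 1. eapply Rle_trans; [apply Cmod_triangle|]. rewrite Cmod_opp. lra. }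
  unfold eps in H3, Heps. destruct Hh as [Hh0 _]. nra.
Qed.

Section TermwiseDerivative.

Variables (a : nat -> C) (f : C -> C).
Hypothesis f_series : forall w, (Cmod w < 1)%R -> is_series (fun k => a k * w ^ k) (f w).

Lemma coefficient_decay_near (z : C) : (Cmod z < 1)%R ->
  exists rho K q, (Cmod z < rho < 1)%R /\ (0 <= K)%R /\ (0 <= q < 1)%R /\
    forall k, (Cmod (a k) * (INR k ^ 2 * rho ^ k) <= K * q ^ k)%R.
Proof.
  intros Hz. pose proof (Cmod_ge_0 z).
  set (rho := ((1 + Cmod z) / 2)%R). set (s := ((3 + Cmod z) / 4)%R).
  destruct (is_series_terms_bounded _ _ (f_series s ltac:(rewrite Cmod_R, Rabs_pos_eq;
                                                           unfold s; lra)))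
    as [M [_ HM]].
  destruct (power_series_coef_decay a s rho M) as [K [q [Hq HK]]]; [unfold rho, s; lra|..].
  { intros k. specialize (HM k).
    rewrite Cmod_mult, Cmod_pow, Cmod_R, Rabs_pos_eq in HM by (unfold s; lra). exact HM. }
  exists rho, K, q. split; [unfold rho; lra|]. split; [|split; assumption].
  specialize (HK 0%nat). simpl in HK. pose proof (Cmod_ge_0 (a 0%nat)). lra.
Qed.

Lemma ex_series_deriv (z : C) (rho K q : R) :
  (Cmod z < rho)%R -> (0 <= q < 1)%R ->
  (forall k, (Cmod (a k) * (INR k ^ 2 * rho ^ k) <= K * q ^ k)%R) ->
  exists D, is_series (fun k => a k * INR k * z ^ (k - 1)) D.
Proof.
  intros Hz Hq HK. pose proof (Cmod_ge_0 z).
  destruct (ex_series_le (K:=C_AbsRing) (V:=C_CompleteNormedModule)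
              (fun k => a k * INR k * z ^ (k - 1)) (fun k => K / rho * q ^ k)%R)
    as [D HD].
  2:{ exists (K / rho * / (1 - q))%R.
      apply (is_series_scal (K:=R_AbsRing) (V:=R_NormedModule) (K / rho)%R).
      apply is_series_geom. rewrite Rabs_pos_eq; lra. }
  - intros k. change norm with Cmod. rewrite !Cmod_mult, Cmod_INR, Cmod_pow.
    apply Rle_trans with (Cmod (a k) * (INR k ^ 2 * rho ^ k) / rho)%R.
    2:{ replace (K / rho * q ^ k)%R with (K * q ^ k / rho)%R by (field; lra).
        apply Rmult_le_compat_r; [left; apply Rinv_0_lt_compat; lra | apply HK]. }
    destruct k as [|k]; [simpl; unfold Rdiv; rewrite !Rmult_0_l, Rmult_0_r; lra|].
    replace (S k - 1)%nat with k by lia.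
    assert (Hzk : (Cmod z ^ k <= rho ^ k)%R) by (apply pow_incr; lra).
    replace (Cmod (a (S k)) * (INR (S k) ^ 2 * rho ^ S k) / rho)%R
      with (Cmod (a (S k)) * INR (S k) * (INR (S k) * rho ^ k))%R by (simpl; field; lra).
    apply Rmult_le_compat_l; [apply Rmult_le_pos; [apply Cmod_ge_0 | apply pos_INR]|].
    rewrite S_INR. pose proof (pos_INR k). pose proof (pow_le rho k ltac:(lra)). nra.
  - exists D. exact HD.
Qed.

Lemma power_series_remainder_le (y z D : C) (rho K q : R) :
  (Cmod y <= rho)%R -> (Cmod z <= rho)%R -> (0 < rho < 1)%R -> (0 <= q < 1)%R ->
  (forall k, (Cmod (a k) * (INR k ^ 2 * rho ^ k) <= K * q ^ k)%R) ->
  is_series (fun k => a k * INR k * z ^ (k - 1)) D ->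
  (Cmod (f y - f z - (y - z) * D) <= K / (rho ^ 2 * (1 - q)) * Cmod (y - z) ^ 2)%R.
Proof.
  intros Hy Hz Hrho Hq HK HD.
  assert (Hrem : is_series (fun k => a k * (y ^ k - z ^ k - (y - z) * (INR k * z ^ (k - 1))))
                   (f y - f z - (y - z) * D)).
  { eapply is_series_ext;
      [|apply (is_series_minus _ _ _ _
                 (is_series_minus _ _ _ _ (f_series y ltac:(lra)) (f_series z ltac:(lra)))
                 (is_series_scal (K:=C_AbsRing) (V:=C_NormedModule) (y - z) _ _ HD))].
    intros k. change plus with Cplus. change opp with Copp. change scal with Cmult.
    C_eq. ring. }
  set (h2 := (Cmod (y - z) ^ 2)%R).
  assert (Hh2 : (0 <= h2)%R) by (apply pow_le, Cmod_ge_0).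
  assert (Hr2 : (0 < rho ^ 2)%R) by (apply pow_lt; lra).
  replace (K / (rho ^ 2 * (1 - q)) * h2)%R with (K * h2 / rho ^ 2 / (1 - q))%R
    by (field; split; lra).
  apply (is_series_Cmod_le _ (fun k => K * h2 / rho ^ 2 * q ^ k)%R _ _ Hrem).
  2:{ apply (is_series_scal (K:=R_AbsRing) (V:=R_NormedModule) (K * h2 / rho ^ 2)%R).
      apply is_series_geom. rewrite Rabs_pos_eq; lra. }
  intros k. rewrite Cmod_mult.
  pose proof (Cpow_taylor_remainder_le y z rho k Hy Hz) as Htaylor. fold h2 in Htaylor.
  apply (Rmult_le_reg_l (rho ^ 2)); [exact Hr2|].
  replace (rho ^ 2 * (K * h2 / rho ^ 2 * q ^ k))%R with (K * q ^ k * h2)%R by (field; lra).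
  eapply Rle_trans; [|apply Rmult_le_compat_r; [exact Hh2 | apply (HK k)]].
  replace (rho ^ 2 * (Cmod (a k) * Cmod (y ^ k - z ^ k - (y - z) * (INR k * z ^ (k - 1)))))%R
    with (Cmod (a k) * (rho ^ 2 * Cmod (y ^ k - z ^ k - (y - z) * (INR k * z ^ (k - 1)))))%R
    by ring.
  replace (Cmod (a k) * (INR k ^ 2 * rho ^ k) * h2)%R
    with (Cmod (a k) * (INR k ^ 2 * rho ^ k * h2))%R by ring.
  apply Rmult_le_compat_l; [apply Cmod_ge_0 | exact Htaylor].
Qed.

Lemma is_series_derive (z df : C) : (Cmod z < 1)%R -> is_derive f z df ->
  is_series (fun k => a k * INR k * z ^ (k - 1)) df.
Proof.
  intros Hz Hdf. pose proof (Cmod_ge_0 z).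
  destruct (coefficient_decay_near z Hz) as (rho & K & q & Hrho & HK0 & Hq & HK).
  destruct (ex_series_deriv z rho K q (proj1 Hrho) Hq HK) as [D HD].
  replace df with D; [exact HD|].
  apply (derive_eq_of_quadratic_remainder f z D df (rho - Cmod z) (K / (rho ^ 2 * (1 - q))));
    [lra | apply Rdiv_le_0_compat; [lra | apply Rmult_lt_0_compat; [apply pow_lt|]; lra]
    | exact Hdf |].
  intros y Hyz.
  apply (power_series_remainder_le y z D rho K q); [|lra | lra | exact Hq | exact HK | exact HD].
  replace y with (z + (y - z)) by ring. eapply Rle_trans; [apply Cmod_triangle|]. lra.
Qed.

Lemma is_series_mul_deriv_sub (w df : C) : (Cmod w < 1)%R -> is_derive f w df ->
  is_series (fun k => (INR k - 1)%R * a k * w ^ k) (w * df - f w).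
Proof.
  intros Hw Hdf.
  eapply is_series_ext;
    [|apply (is_series_minus _ _ _ _
               (is_series_scal (K:=C_AbsRing) (V:=C_NormedModule) w _ _
                  (is_series_derive w df Hw Hdf))
               (f_series w Hw))].
  intros k. change plus with Cplus. change opp with Copp. change scal with Cmult. C_eq.
  rewrite RtoC_minus. destruct k as [|k]; [simpl; ring|].
  replace (S k - 1)%nat with k by lia. simpl. ring.
Qed.

End TermwiseDerivative.

Theorem theorem2p1 (a : nat -> C) (f phi : C -> C) (rK : R) :
  a 0%nat = 0 -> a 1%nat = 1 ->
  (forall z, in_disk 1 z -> is_series (fun k => a k * pow_n z k) (f z)) ->
  analytic_in_disk 1 phi ->
  (forall z, in_disk 1 z -> (Cmod (phi z) <= 1)%R) ->
  (forall z, in_disk 1 z ->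
     exists df, is_derive f z df /\ z * df - f z = (z * z * phi z) / 2) ->
  (0 < rK < 1)%R ->
  ((1 - rK) ^ 2 * ln (1 - rK) + 2 - 7 * rK + 4 * rK ^ 2 = 0)%R ->
  forall n : nat, (2 <= n)%nat -> convex_in_disk rK (partial_sum a n).
Proof.
  intros Ha0 Ha1 Hf _ Hphi Hde HrK Heq n Hn.
  (* [z f' - f = z^2 phi / 2] has coefficients [(k - 1) a_k] and modulus [<= 1/2]. *)
  assert (Hcoef : forall k, (Cmod ((INR k - 1)%R * a k) <= / 2)%R).
  { apply (coefficient_bound _ (fun w => w * w * phi w / 2)); intros w Hw.
    - destruct (Hde w Hw) as [df [Hdf <-]]. exact (is_series_mul_deriv_sub a f Hf w df Hw Hdf).
    - assert (H2 : RtoC 2 <> 0) by (intros E; apply RtoC_inj in E; lra).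
      unfold Cdiv. rewrite !Cmod_mult, Cmod_inv, Cmod_R, Rabs_pos_eq by (exact H2 || lra).
      pose proof (Hphi w Hw). pose proof (Cmod_ge_0 w). pose proof (Cmod_ge_0 (phi w)).
      unfold in_disk in Hw.
      assert (Cmod w * Cmod w <= 1)%R by nra.
      assert (Cmod w * Cmod w * Cmod (phi w) <= 1)%R by nra.
      lra. }
  apply partial_sum_convex; try assumption.
  intros k Hk. specialize (Hcoef k).
  assert (H1 : (1 <= INR k - 1)%R) by (apply (le_INR 2) in Hk; simpl in Hk; lra).
  rewrite Cmod_mult, Cmod_R, Rabs_pos_eq in Hcoef by lra.
  replace (/ (2 * (INR k - 1)))%R with (/ 2 / (INR k - 1))%R by (field; lra).
  apply Rle_div_r; lra.
Qed.
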